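(* Let $\epsilon,\delta\in\{1,i\}$. Let $(M,g)$ be a surface with isothermal coordinates $(x,y)$, $g=e^{f}dv\,dw$, $v=x+\epsilon y$, $w=x-\epsilon y$, and $(N,h)$ a surface with isothermal coordinates $(R,S)$, $h=e^{F(V,W)}dV\,dW=e^F(dR^2-\delta^2dS^2)$, $V=R+\delta S$, $W=R-\delta S$, with curvature $K_N=-2F_{VW}e^{-F}$. Let $u=(R,S):M\to N$ be a nontrivial harmonic map with nonvanishing Jacobian, with $(x,y)$ specific coordinates for $u$ (i.e. $e^FV_vW_v=1=e^FV_wW_w$), and let $\Omega,\Theta$ be functions with $$R_x=2e^{-F/2}\cosh\Omega\cosh\Theta,\quad R_y=2\epsilon e^{-F/2}\sinh\Omega\sinh\Theta,\quad S_x=\tfrac{2}{\delta}e^{-F/2}\cosh\Omega\sinh\Theta,\quad S_y=\tfrac{2\epsilon}{\delta}e^{-F/2}\sinh\Omega\cosh\Theta.$$ Then the equation $$2\Theta_{vw}=e^{-F}\Big((F_V^2-F_{VV})e^{2\Theta}-(F_W^2-F_{WW})e^{-2\Theta}\Big)$$ is the Bäcklund transform of the equation $$\Omega_{vw}=-\frac{K_N}{2}\sinh(2\Omega),$$ where $\Theta$ and $\Omega$ are related by $$\Omega_x-\frac1\epsilon\Theta_y=\frac12F_x\tanh\Omega,\qquad \Omega_y-\epsilon\Theta_x=\frac12F_y\coth\Omega,$$ with $F_x=F_RR_x+F_SS_x$, $F_y=F_RR_y+F_SS_y$. That is, $\Theta$ satisfies the first equation, $\Omega$ satisfies the second, and the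 two are connected by the displayed first-order system.
   Context: Derivatives with respect to $v,w$ are $\partial_v=\tfrac12(\partial_x+\tfrac1\epsilon\partial_y)$, $\partial_w=\tfrac12(\partial_x-\tfrac1\epsilon\partial_y)$. A map $u$ is harmonic if it satisfies the Euler–Lagrange equations of $E(u)=\frac12\int_M e^{F(V,W)}(V_vW_w+V_wW_v)\,dv\,dw$; it is nontrivial if $V_vW_vV_wW_w\neq0$. A Bäcklund transformation is a system of first-order PDEs relating solutions of one PDE to solutions of another PDE; one solution is then called the Bäcklund transform of the other. *)

From Stdlib Require Import Reals.
From Coquelicot Require Import Coquelicot.
Open Scope R_scope.

Definition px (g : R -> R -> R) : R -> R -> R :=
  fun x y => Derive (fun t => g t y) x.
Definition py (g : R -> R -> R) : R -> R -> R :=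
  fun x y => Derive (fun t => g x t) y.

Fixpoint Ck (k : nat) (D : R -> R -> Prop) (g : R -> R -> R) : Prop :=
  (forall x y, D x y ->
     continuous (fun p : R * R => g (fst p) (snd p)) (x, y)) /\
  match k with
  | O => True
  | S k' =>
      (forall x y, D x y ->
         ex_derive (fun t => g t y) x /\ ex_derive (fun t => g x t) y) /\
      Ck k' D (px g) /\ Ck k' D (py g)
  end.

Definition smooth_on (D : R -> R -> Prop) (g : R -> R -> R) : Prop :=
  forall k, Ck k D g.

Definition open2 (D : R -> R -> Prop) : Prop :=
  open (fun p : R * R => D (fst p) (snd p)).

Definition lift (g : R -> R -> R) : R -> R -> C := fun x y => RtoC (g x y).

Definition csmooth_on (D : R -> R -> Prop) (h : R -> R -> C) : Prop :=
  smooth_on D (fun x y => Re (h x y)) /\ smooth_on D (fun x y => Im (h x y)).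

Definition cpx (h : R -> R -> C) : R -> R -> C :=
  fun x y => (px (fun a b => Re (h a b)) x y, px (fun a b => Im (h a b)) x y).
Definition cpy (h : R -> R -> C) : R -> R -> C :=
  fun x y => (py (fun a b => Re (h a b)) x y, py (fun a b => Im (h a b)) x y).

(** For coordinates v = x + e y, w = x - e y (e in {1, i}):
    d_v = 1/2 (d_x + (1/e) d_y),  d_w = 1/2 (d_x - (1/e) d_y). *)
Definition dplus (e : C) (h : R -> R -> C) : R -> R -> C :=
  fun x y => (/ 2 * (cpx h x y + / e * cpy h x y))%C.
Definition dminus (e : C) (h : R -> R -> C) : R -> R -> C :=
  fun x y => (/ 2 * (cpx h x y - / e * cpy h x y))%C.

Definition Cexp (z : C) : C :=
  (RtoC (exp (Re z)) * (cos (Im z), sin (Im z)))%C.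
Definition Ccosh (z : C) : C := ((Cexp z + Cexp (- z)) / 2)%C.
Definition Csinh (z : C) : C := ((Cexp z - Cexp (- z)) / 2)%C.
Definition Ctanh (z : C) : C := (Csinh z / Ccosh z)%C.
Definition Ccoth (z : C) : C := (Ccosh z / Csinh z)%C.

(** The setting.  eps : type of M (v = x + eps y), dlt : type of N
    (V = R + dlt S, W = R - dlt S).
    F : the conformal factor of h as a (real) function of (R, S). *)

Definition Vf (dlt : C) (Rf Sf : R -> R -> R) : R -> R -> C :=
  fun x y => (RtoC (Rf x y) + dlt * RtoC (Sf x y))%C.
Definition Wf (dlt : C) (Rf Sf : R -> R -> R) : R -> R -> C :=
  fun x y => (RtoC (Rf x y) - dlt * RtoC (Sf x y))%C.

Definition onu (G : R -> R -> C) (Rf Sf : R -> R -> R) : R -> R -> C :=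
  fun x y => G (Rf x y) (Sf x y).

Definition F_V dlt F := dplus dlt (lift F).
Definition F_W dlt F := dminus dlt (lift F).
Definition F_VV dlt F := dplus dlt (dplus dlt (lift F)).
Definition F_WW dlt F := dminus dlt (dminus dlt (lift F)).
Definition F_VW dlt F := dplus dlt (dminus dlt (lift F)).

Definition K_N (dlt : C) (F : R -> R -> R) : R -> R -> C :=
  fun r s => (- 2 * F_VW dlt F r s * RtoC (exp (- F r s)))%C.

(** Harmonicity: the Euler-Lagrange equations of
    E(u) = 1/2 \int e^{F(V,W)} (V_v W_w + V_w W_v) dv dw,
    with L = 1/2 e^F (V_v W_w + V_w W_v):
      dL/dV - d_v (dL/dV_v) - d_w (dL/dV_w) = 0,
      dL/dW - d_v (dL/dW_v) - d_w (dL/dW_w) = 0. *)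
Definition harmonic_on (D : R -> R -> Prop) (eps dlt : C)
    (F : R -> R -> R) (Rf Sf : R -> R -> R) : Prop :=
  let V := Vf dlt Rf Sf in
  let W := Wf dlt Rf Sf in
  let eF := fun x y => RtoC (exp (F (Rf x y) (Sf x y))) in
  let Q := fun x y =>
     (dplus eps V x y * dminus eps W x y + dminus eps V x y * dplus eps W x y)%C in
  forall x y, D x y ->
    (/ 2 * eF x y * onu (F_V dlt F) Rf Sf x y * Q x y
     - dplus eps (fun a b => / 2 * eF a b * dminus eps W a b)%C x y
     - dminus eps (fun a b => / 2 * eF a b * dplus eps W a b)%C x y)%C = 0%C /\
    (/ 2 * eF x y * onu (F_W dlt F) Rf Sf x y * Q x y
     - dplus eps (fun a b => / 2 * eF a b * dminus eps V a b)%C x y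
     - dminus eps (fun a b => / 2 * eF a b * dplus eps V a b)%C x y)%C = 0%C.

Definition nontrivial_on (D : R -> R -> Prop) (eps dlt : C)
    (Rf Sf : R -> R -> R) : Prop :=
  forall x y, D x y ->
    (dplus eps (Vf dlt Rf Sf) x y * dplus eps (Wf dlt Rf Sf) x y *
     dminus eps (Vf dlt Rf Sf) x y * dminus eps (Wf dlt Rf Sf) x y)%C <> 0%C.

Definition nonzero_jacobian_on (D : R -> R -> Prop) (Rf Sf : R -> R -> R) : Prop :=
  forall x y, D x y -> px Rf x y * py Sf x y - py Rf x y * px Sf x y <> 0.

Definition specific_coords_on (D : R -> R -> Prop) (eps dlt : C)
    (F : R -> R -> R) (Rf Sf : R -> R -> R) : Prop :=
  forall x y, D x y ->
    (RtoC (exp (F (Rf x y) (Sf x y))) *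
       dplus eps (Vf dlt Rf Sf) x y * dplus eps (Wf dlt Rf Sf) x y)%C = 1%C /\
    (RtoC (exp (F (Rf x y) (Sf x y))) *
       dminus eps (Vf dlt Rf Sf) x y * dminus eps (Wf dlt Rf Sf) x y)%C = 1%C.

From Stdlib Require Import Reals Lra FunctionalExtensionality.
From Coquelicot Require Import Coquelicot.
Open Scope R_scope.
Set Bullet Behavior "Strict Subproofs".

(* In the null coordinates v, w the parametrization of du by Omega and Theta says
   exactly that V_v, V_w, W_v, W_w are e^(-F/2) times e^(Om+Th), e^(Th-Om), e^(-Om-Th),
   e^(Om-Th).  Substituted into the two Euler-Lagrange equations this gives a linear
   system for Om_w + Th_w and Th_v - Om_v whose determinant V_v W_w - V_w W_v is a
   nonzero multiple of the Jacobian of u; its solution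
     Om_w + Th_w = (F_W W_w - F_V V_w) / 2,   Th_v - Om_v = (F_W W_v - F_V V_v) / 2
   is the Baecklund system written in v, w.  Applying d_v to the first equation and d_w
   to the second, with d_v d_w = d_w d_v, the chain rule G_v = G_V V_v + G_W W_v for
   G = F, F_V, F_W, and the system itself to eliminate first derivatives, gives
   2 Th_vw and 2 Om_vw as their sum and difference. *)

Lemma Cexp_add (a b : C) : Cexp (a + b) = (Cexp a * Cexp b)%C.
Proof.
  unfold Cexp, Cmult, Cplus, RtoC, Re, Im; simpl.
  rewrite exp_plus, cos_plus, sin_plus; apply injective_projections; simpl; ring.
Qed.

Lemma Cexp_RtoC (r : R) : Cexp (RtoC r) = RtoC (exp r).
Proof.
  unfold Cexp, Cmult, RtoC, Re, Im; simpl.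
  rewrite cos_0, sin_0; apply injective_projections; simpl; ring.
Qed.

Lemma Cexp_neq0 (a : C) : Cexp a <> 0%C.
Proof.
  intros H.
  assert (H1 : (Cexp a * Cexp (- a))%C = RtoC 1).
  { rewrite <- Cexp_add, Cplus_opp_r, Cexp_RtoC, exp_0; reflexivity. }
  rewrite H, Cmult_0_l in H1.
  apply (f_equal fst) in H1; simpl in H1; lra.
Qed.

Lemma Cexp_opp (a : C) : Cexp (- a) = (/ Cexp a)%C.
Proof.
  assert (H : (Cexp a * Cexp (- a))%C = RtoC 1).
  { rewrite <- Cexp_add, Cplus_opp_r, Cexp_RtoC, exp_0; reflexivity. }
  pose proof (Cexp_neq0 a).
  transitivity (/ Cexp a * (Cexp a * Cexp (- a)))%C; [field; auto|].
  rewrite H; ring.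
Qed.

Lemma Ccosh_Cexp (z : C) : Ccosh z = ((Cexp z + / Cexp z) / 2)%C.
Proof. unfold Ccosh; rewrite Cexp_opp; reflexivity. Qed.

Lemma Csinh_Cexp (z : C) : Csinh z = ((Cexp z - / Cexp z) / 2)%C.
Proof. unfold Csinh; rewrite Cexp_opp; reflexivity. Qed.

Lemma exp_half_Cexp (r : R) :
  RtoC (exp r) = (Cexp (/ 2 * RtoC r) * Cexp (/ 2 * RtoC r))%C.
Proof. rewrite <- Cexp_add, <- Cexp_RtoC; f_equal; field. Qed.

Lemma Csinh_neq0_Cexp (z : C) : Csinh z <> 0%C -> (Cexp z * Cexp z - 1)%C <> 0%C.
Proof.
  intros H H0; apply H; rewrite Csinh_Cexp.
  pose proof (Cexp_neq0 z).
  replace (Cexp z - / Cexp z)%C with ((Cexp z * Cexp z - 1) / Cexp z)%C by (field; auto).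
  rewrite H0; field; auto.
Qed.

Lemma Ccosh_neq0_Cexp (z : C) : Ccosh z <> 0%C -> (Cexp z * Cexp z + 1)%C <> 0%C.
Proof.
  intros H H0; apply H; rewrite Ccosh_Cexp.
  pose proof (Cexp_neq0 z).
  replace (Cexp z + / Cexp z)%C with ((Cexp z * Cexp z + 1) / Cexp z)%C by (field; auto).
  rewrite H0; field; auto.
Qed.

Lemma Cexp_double (a : C) : Cexp (2 * a) = (Cexp a * Cexp a)%C.
Proof. rewrite <- Cexp_add; f_equal; ring. Qed.

Lemma exp_neg_Cexp (r : R) :
  RtoC (exp (- r)) = (/ (Cexp (/ 2 * RtoC r) * Cexp (/ 2 * RtoC r)))%C.
Proof.
  rewrite <- exp_half_Cexp, exp_Ropp, RtoC_inv; [reflexivity|].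
  apply Rgt_not_eq, exp_pos.
Qed.

Lemma exp_neg_half_Cexp (r : R) : RtoC (exp (- r / 2)) = Cexp (- (/ 2 * RtoC r)).
Proof.
  rewrite <- Cexp_RtoC; f_equal.
  rewrite RtoC_div by lra; rewrite RtoC_opp; field.
Qed.

Lemma Ceq_of_sub_mul (z w k r : C) : r = 0%C -> (z - w = k * r)%C -> z = w.
Proof. intros -> H; apply Ceq_minus; rewrite H; ring. Qed.

Lemma linear2_unique (a11 a12 a21 a22 z1 z2 w1 w2 : C) :
  (a11 * a22 - a12 * a21)%C <> 0%C ->
  (a11 * z1 + a12 * z2 = a11 * w1 + a12 * w2)%C ->
  (a21 * z1 + a22 * z2 = a21 * w1 + a22 * w2)%C ->
  z1 = w1 /\ z2 = w2.
Proof.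
  intros Hdet H1 H2; split.
  - apply (Ceq_of_sub_mul _ _ (/ (a11 * a22 - a12 * a21))
      (a22 * (a11 * z1 + a12 * z2 - (a11 * w1 + a12 * w2))
       - a12 * (a21 * z1 + a22 * z2 - (a21 * w1 + a22 * w2)))%C).
    + rewrite H1, H2; ring.
    + field; exact Hdet.
  - apply (Ceq_of_sub_mul _ _ (/ (a11 * a22 - a12 * a21))
      (a11 * (a21 * z1 + a22 * z2 - (a21 * w1 + a22 * w2))
       - a21 * (a11 * z1 + a12 * z2 - (a11 * w1 + a12 * w2)))%C).
    + rewrite H1, H2; ring.
    + field; exact Hdet.
Qed.

(** * Derivatives of complex-valued functions in null coordinates *)

Lemma derivable_pt_lim_val (f : R -> R) (x l l' : R) :
  derivable_pt_lim f x l -> l = l' -> derivable_pt_lim f x l'.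
Proof. intros H <-; exact H. Qed.

Lemma derivable_pt_lim_ext_loc (f g : R -> R) (x l : R) :
  locally x (fun t => f t = g t) -> derivable_pt_lim f x l -> derivable_pt_lim g x l.
Proof.
  intros E H; apply is_derive_Reals, (is_derive_ext_loc f); [exact E | apply is_derive_Reals, H].
Qed.

Lemma Derive_of_derivable_pt_lim (f : R -> R) (x l : R) :
  derivable_pt_lim f x l -> Derive f x = l.
Proof. intros H; apply is_derive_unique, is_derive_Reals, H. Qed.

Definition is_cderive (h : R -> C) (t : R) (l : C) : Prop :=
  derivable_pt_lim (fun s => Re (h s)) t (Re l) /\
  derivable_pt_lim (fun s => Im (h s)) t (Im l).

Lemma is_cderive_val (f : R -> C) (t : R) (l l' : C) :
  is_cderive f t l -> l = l' -> is_cderive f t l'.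
Proof. intros H <-; exact H. Qed.

Lemma is_cderive_ext_loc (f g : R -> C) (t : R) (l : C) :
  locally t (fun s => f s = g s) -> is_cderive f t l -> is_cderive g t l.
Proof.
  intros E [H1 H2]; split; eapply derivable_pt_lim_ext_loc; eauto;
    eapply filter_imp; try exact E; intros s ->; reflexivity.
Qed.

Lemma is_cderive_unique (f : R -> C) (t : R) (l : C) :
  is_cderive f t l -> (Derive (fun s => Re (f s)) t, Derive (fun s => Im (f s)) t) = l.
Proof.
  intros [H1 H2]; rewrite (Derive_of_derivable_pt_lim _ _ _ H1),
    (Derive_of_derivable_pt_lim _ _ _ H2); destruct l; reflexivity.
Qed.

Lemma is_cderive_const (c : C) (t : R) : is_cderive (fun _ => c) t 0%C.
Proof. split; apply derivable_pt_lim_const. Qed.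

Lemma is_cderive_RtoC (f : R -> R) (t a : R) :
  derivable_pt_lim f t a -> is_cderive (fun s => RtoC (f s)) t (RtoC a).
Proof. split; [exact H | apply derivable_pt_lim_const]. Qed.

Lemma is_cderive_plus (f g : R -> C) (t : R) (a b : C) :
  is_cderive f t a -> is_cderive g t b -> is_cderive (fun s => f s + g s)%C t (a + b)%C.
Proof. intros [Hf1 Hf2] [Hg1 Hg2]; split; apply derivable_pt_lim_plus; auto. Qed.

Lemma is_cderive_opp (f : R -> C) (t : R) (a : C) :
  is_cderive f t a -> is_cderive (fun s => - f s)%C t (- a)%C.
Proof. intros [H1 H2]; split; apply derivable_pt_lim_opp; auto. Qed.

Lemma is_cderive_mult (f g : R -> C) (t : R) (a b : C) :
  is_cderive f t a -> is_cderive g t b ->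
  is_cderive (fun s => f s * g s)%C t (a * g t + f t * b)%C.
Proof.
  intros [Hf1 Hf2] [Hg1 Hg2]; split; eapply derivable_pt_lim_val.
  - exact (derivable_pt_lim_minus _ _ t _ _
      (derivable_pt_lim_mult _ _ t _ _ Hf1 Hg1) (derivable_pt_lim_mult _ _ t _ _ Hf2 Hg2)).
  - simpl; unfold Re, Im; ring.
  - exact (derivable_pt_lim_plus _ _ t _ _
      (derivable_pt_lim_mult _ _ t _ _ Hf1 Hg2) (derivable_pt_lim_mult _ _ t _ _ Hf2 Hg1)).
  - simpl; unfold Re, Im; ring.
Qed.

Lemma is_cderive_Cexp (f : R -> C) (t : R) (a : C) :
  is_cderive f t a -> is_cderive (fun s => Cexp (f s)) t (a * Cexp (f t))%C.
Proof.
  intros [H1 H2].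
  assert (Hmod : is_cderive (fun s => RtoC (exp (Re (f s)))) t
                   (RtoC (exp (Re (f t)) * Re a))).
  { apply is_cderive_RtoC, (derivable_pt_lim_comp _ exp); auto using derivable_pt_lim_exp. }
  assert (Harg : is_cderive (fun s => (cos (Im (f s)), sin (Im (f s)))) t
                   (- sin (Im (f t)) * Im a, cos (Im (f t)) * Im a)).
  { split; [apply (derivable_pt_lim_comp _ cos) | apply (derivable_pt_lim_comp _ sin)];
      auto using derivable_pt_lim_cos, derivable_pt_lim_sin. }
  eapply is_cderive_val; [exact (is_cderive_mult _ _ t _ _ Hmod Harg)|].
  apply injective_projections; unfold Cexp; simpl; unfold Re, Im; ring.
Qed.

(* With v = x + e y and w = x - e y, the chain rule gives d_x = d_v + d_w and
   d_y = e (d_v - d_w). *)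
Definition is_vw_derive (e : C) (h : R -> R -> C) (x y : R) (hv hw : C) : Prop :=
  is_cderive (fun t => h t y) x (hv + hw)%C /\ is_cderive (fun t => h x t) y (e * (hv - hw))%C.

Section VWCalculus.

Variables (e : C) (x y : R).
Hypothesis e_neq0 : e <> 0%C.

Lemma is_vw_derive_of_partials (h : R -> R -> C) (hx hy : C) :
  is_cderive (fun t => h t y) x hx -> is_cderive (fun t => h x t) y hy ->
  is_vw_derive e h x y (/ 2 * (hx + / e * hy))%C (/ 2 * (hx - / e * hy))%C.
Proof. intros Hx Hy; split; (eapply is_cderive_val; [eassumption | field; exact e_neq0]). Qed.

Lemma cpx_cpy_of_vw (h : R -> R -> C) (hv hw : C) :
  is_vw_derive e h x y hv hw -> cpx h x y = (hv + hw)%C /\ cpy h x y = (e * (hv - hw))%C.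
Proof.
  intros [Hx Hy]; unfold cpx, cpy, px, py.
  rewrite (is_cderive_unique _ _ _ Hx), (is_cderive_unique _ _ _ Hy); split; reflexivity.
Qed.

Lemma dplus_dminus_of_vw (h : R -> R -> C) (hv hw : C) :
  is_vw_derive e h x y hv hw -> dplus e h x y = hv /\ dminus e h x y = hw.
Proof.
  intros H; unfold dplus, dminus; destruct (cpx_cpy_of_vw h hv hw H) as [-> ->].
  split; field; exact e_neq0.
Qed.

Lemma is_vw_derive_dplus_dminus (h : R -> R -> C) (hv hw : C) :
  is_vw_derive e h x y hv hw -> is_vw_derive e h x y (dplus e h x y) (dminus e h x y).
Proof. intros H; destruct (dplus_dminus_of_vw h hv hw H) as [-> ->]; exact H. Qed.

Lemma is_vw_derive_val (h : R -> R -> C) (hv hw hv' hw' : C) :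
  is_vw_derive e h x y hv hw -> hv = hv' -> hw = hw' -> is_vw_derive e h x y hv' hw'.
Proof. intros H <- <-; exact H. Qed.

Lemma is_vw_derive_ext_on (D : R -> R -> Prop) (f g : R -> R -> C) (hv hw : C) :
  open2 D -> (forall a b, D a b -> f a b = g a b) -> D x y ->
  is_vw_derive e f x y hv hw -> is_vw_derive e g x y hv hw.
Proof.
  intros HD Hfg Dxy [Hx Hy].
  assert (L : locally_2d (fun a b => f a b = g a b) x y).
  { eapply locally_2d_impl; [apply locally_2d_forall; exact Hfg|].
    apply locally_2d_locally, (HD (x, y)), Dxy. }
  split; eapply is_cderive_ext_loc; eauto.
  - exact (locally_2d_1d_const_y _ _ _ L).
  - exact (locally_2d_1d_const_x _ _ _ L).
Qed.

Lemma is_vw_derive_const (c : C) : is_vw_derive e (fun _ _ => c) x y 0%C 0%C.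
Proof. split; (eapply is_cderive_val; [apply is_cderive_const | ring]). Qed.

Lemma is_vw_derive_plus (f g : R -> R -> C) (fv fw gv gw : C) :
  is_vw_derive e f x y fv fw -> is_vw_derive e g x y gv gw ->
  is_vw_derive e (fun a b => f a b + g a b)%C x y (fv + gv)%C (fw + gw)%C.
Proof.
  intros [Fx Fy] [Gx Gy];
    split; (eapply is_cderive_val; [apply is_cderive_plus; eassumption | ring]).
Qed.

Lemma is_vw_derive_opp (f : R -> R -> C) (fv fw : C) :
  is_vw_derive e f x y fv fw -> is_vw_derive e (fun a b => - f a b)%C x y (- fv)%C (- fw)%C.
Proof.
  intros [Fx Fy]; split; (eapply is_cderive_val; [apply is_cderive_opp; eassumption | ring]).
Qed.

Lemma is_vw_derive_minus (f g : R -> R -> C) (fv fw gv gw : C) :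
  is_vw_derive e f x y fv fw -> is_vw_derive e g x y gv gw ->
  is_vw_derive e (fun a b => f a b - g a b)%C x y (fv - gv)%C (fw - gw)%C.
Proof. intros Hf Hg; exact (is_vw_derive_plus _ _ _ _ _ _ Hf (is_vw_derive_opp _ _ _ Hg)). Qed.

Lemma is_vw_derive_mult (f g : R -> R -> C) (fv fw gv gw : C) :
  is_vw_derive e f x y fv fw -> is_vw_derive e g x y gv gw ->
  is_vw_derive e (fun a b => f a b * g a b)%C x y
    (fv * g x y + f x y * gv)%C (fw * g x y + f x y * gw)%C.
Proof.
  intros [Fx Fy] [Gx Gy];
    split; (eapply is_cderive_val; [apply is_cderive_mult; eassumption | cbv beta; ring]).
Qed.

Lemma is_vw_derive_scal (c : C) (f : R -> R -> C) (fv fw : C) :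
  is_vw_derive e f x y fv fw -> is_vw_derive e (fun a b => c * f a b)%C x y (c * fv)%C (c * fw)%C.
Proof.
  intros Hf; eapply is_vw_derive_val;
    [exact (is_vw_derive_mult _ _ _ _ _ _ (is_vw_derive_const c) Hf) | cbv beta; ring ..].
Qed.

Lemma is_vw_derive_Cexp (f : R -> R -> C) (fv fw : C) :
  is_vw_derive e f x y fv fw ->
  is_vw_derive e (fun a b => Cexp (f a b)) x y (fv * Cexp (f x y))%C (fw * Cexp (f x y))%C.
Proof.
  intros [Fx Fy];
    split; (eapply is_cderive_val; [apply is_cderive_Cexp; eassumption | cbv beta; ring]).
Qed.

End VWCalculus.

Section SmoothFunctions.

Variable D : R -> R -> Prop.

Lemma smooth_on_px (g : R -> R -> R) : smooth_on D g -> smooth_on D (px g).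
Proof. intros H k; exact (proj1 (proj2 (proj2 (H (S k))))). Qed.

Lemma smooth_on_py (g : R -> R -> R) : smooth_on D g -> smooth_on D (py g).
Proof. intros H k; exact (proj2 (proj2 (proj2 (H (S k))))). Qed.

Lemma smooth_on_continuous (g : R -> R -> R) (x y : R) : smooth_on D g -> D x y ->
  continuous (fun p : R * R => g (fst p) (snd p)) (x, y).
Proof. intros H Dxy; exact (proj1 (H O) x y Dxy). Qed.

Lemma smooth_on_ex_derive (g : R -> R -> R) (x y : R) : smooth_on D g -> D x y ->
  ex_derive (fun t => g t y) x /\ ex_derive (fun t => g x t) y.
Proof. intros H Dxy; exact (proj1 (proj2 (H 1%nat)) x y Dxy). Qed.

Lemma smooth_on_derivable_x (g : R -> R -> R) (x y : R) : smooth_on D g -> D x y ->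
  derivable_pt_lim (fun t => g t y) x (px g x y).
Proof.
  intros H Dxy; apply is_derive_Reals, Derive_correct, (smooth_on_ex_derive g x y H Dxy).
Qed.

Lemma smooth_on_derivable_y (g : R -> R -> R) (x y : R) : smooth_on D g -> D x y ->
  derivable_pt_lim (fun t => g x t) y (py g x y).
Proof.
  intros H Dxy; apply is_derive_Reals, Derive_correct, (smooth_on_ex_derive g x y H Dxy).
Qed.

Lemma smooth_on_differentiable (g : R -> R -> R) (x y : R) :
  open2 D -> smooth_on D g -> D x y -> differentiable_pt_lim g x y (px g x y) (py g x y).
Proof.
  intros HD Hg Dxy; apply filterdiff_differentiable_pt_lim.
  eapply filterdiff_ext_lin.
  - apply (is_derive_filterdiff g x y (px g) (py g x y)).
    + eapply filter_imp; [|exact (HD (x, y) Dxy)].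
      intros [u v] Huv; apply is_derive_Reals, smooth_on_derivable_x; assumption.
    + apply is_derive_Reals, smooth_on_derivable_y; assumption.
    + apply smooth_on_continuous; [apply smooth_on_px|]; assumption.
  - intros [u v]; reflexivity.
Qed.

Lemma smooth_on_Schwarz (g : R -> R -> R) (x y : R) :
  open2 D -> smooth_on D g -> D x y -> px (py g) x y = py (px g) x y.
Proof.
  intros HD Hg Dxy; apply Schwarz.
  - eapply locally_2d_impl; [| apply locally_2d_locally, (HD (x, y)), Dxy].
    apply locally_2d_forall; intros u v Duv.
    destruct (smooth_on_ex_derive g u v Hg Duv) as [Hx Hy].
    destruct (smooth_on_ex_derive (py g) u v (smooth_on_py g Hg) Duv) as [Hyx _].
    destruct (smooth_on_ex_derive (px g) u v (smooth_on_px g Hg) Duv) as [_ Hxy].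
    repeat split; assumption.
  - apply (continuity_2d_pt_filterlim (px (py g))), smooth_on_continuous;
      [apply smooth_on_px, smooth_on_py|]; assumption.
  - apply (continuity_2d_pt_filterlim (py (px g))), smooth_on_continuous;
      [apply smooth_on_py, smooth_on_px|]; assumption.
Qed.

Lemma smooth_on_zero : smooth_on D (fun _ _ => 0).
Proof.
  assert (Hk : forall k g, (forall x y, g x y = 0) -> Ck k D g).
  { induction k as [|k IH]; intros g Hg0;
      (assert (Hc : forall x y, D x y ->
                 continuous (fun p : R * R => g (fst p) (snd p)) (x, y))
         by (intros x y _; eapply continuous_ext;
             [intros p; symmetry; apply Hg0 | apply continuous_const])).
    - split; [exact Hc | exact I].
    - assert (Hd : forall f : R -> R, (forall t, f t = 0) -> forall t, Derive f t = 0).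
      { intros f Hf t; rewrite (Derive_ext f (fun _ => 0)) by exact Hf; apply Derive_const. }
      split; [exact Hc|]; split; [|split; apply IH; intros; apply Hd; auto].
      intros x y _; split; eapply ex_derive_ext;
        try (intros t; symmetry; apply Hg0); apply ex_derive_const. }
  intros k; apply Hk; reflexivity.
Qed.

Lemma csmooth_on_lift (g : R -> R -> R) : smooth_on D g -> csmooth_on D (lift g).
Proof. intros Hg; split; [exact Hg | exact smooth_on_zero]. Qed.

Lemma csmooth_on_cpx (h : R -> R -> C) : csmooth_on D h -> csmooth_on D (cpx h).
Proof. intros [H1 H2]; split; apply smooth_on_px; assumption. Qed.

Lemma csmooth_on_cpy (h : R -> R -> C) : csmooth_on D h -> csmooth_on D (cpy h).
Proof. intros [H1 H2]; split; apply smooth_on_py; assumption. Qed.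

Lemma csmooth_on_Schwarz (h : R -> R -> C) (x y : R) :
  open2 D -> csmooth_on D h -> D x y -> cpx (cpy h) x y = cpy (cpx h) x y.
Proof.
  intros HD [H1 H2] Dxy; unfold cpx, cpy; simpl.
  f_equal; apply smooth_on_Schwarz; assumption.
Qed.

Variable e : C.
Hypothesis e_neq0 : e <> 0%C.

Lemma is_vw_derive_csmooth (h : R -> R -> C) (x y : R) :
  csmooth_on D h -> D x y -> is_vw_derive e h x y (dplus e h x y) (dminus e h x y).
Proof.
  intros [H1 H2] Dxy; apply is_vw_derive_of_partials; [exact e_neq0| |]; split.
  - exact (smooth_on_derivable_x _ x y H1 Dxy).
  - exact (smooth_on_derivable_x _ x y H2 Dxy).
  - exact (smooth_on_derivable_y _ x y H1 Dxy).
  - exact (smooth_on_derivable_y _ x y H2 Dxy).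
Qed.

Lemma dplus_dminus_comm (h : R -> R -> C) (x y : R) :
  open2 D -> csmooth_on D h -> D x y -> dplus e (dminus e h) x y = dminus e (dplus e h) x y.
Proof.
  intros HD Hh Dxy.
  pose proof (is_vw_derive_csmooth _ x y (csmooth_on_cpx h Hh) Dxy) as dX.
  pose proof (is_vw_derive_csmooth _ x y (csmooth_on_cpy h Hh) Dxy) as dY.
  eassert (dM : is_vw_derive e (dminus e h) x y _ _)
    by exact (is_vw_derive_scal e x y _ _ _ _
                (is_vw_derive_minus e x y _ _ _ _ _ _ dX (is_vw_derive_scal e x y _ _ _ _ dY))).
  eassert (dP : is_vw_derive e (dplus e h) x y _ _)
    by exact (is_vw_derive_scal e x y _ _ _ _
                (is_vw_derive_plus e x y _ _ _ _ _ _ dX (is_vw_derive_scal e x y _ _ _ _ dY))).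
  rewrite (proj1 (dplus_dminus_of_vw _ _ _ e_neq0 _ _ _ dM)),
    (proj2 (dplus_dminus_of_vw _ _ _ e_neq0 _ _ _ dP)).
  unfold dplus, dminus; rewrite (csmooth_on_Schwarz h x y HD Hh Dxy).
  field; exact e_neq0.
Qed.

Lemma is_vw_derive_dplus_csmooth (h : R -> R -> C) (x y : R) :
  csmooth_on D h -> D x y ->
  is_vw_derive e (dplus e h) x y (dplus e (dplus e h) x y) (dminus e (dplus e h) x y).
Proof.
  intros Hh Dxy; eapply is_vw_derive_dplus_dminus; [exact e_neq0|].
  apply is_vw_derive_scal, is_vw_derive_plus, is_vw_derive_scal;
    apply is_vw_derive_csmooth; auto using csmooth_on_cpx, csmooth_on_cpy.
Qed.

Lemma is_vw_derive_dminus_csmooth (h : R -> R -> C) (x y : R) :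
  csmooth_on D h -> D x y ->
  is_vw_derive e (dminus e h) x y (dplus e (dminus e h) x y) (dminus e (dminus e h) x y).
Proof.
  intros Hh Dxy; eapply is_vw_derive_dplus_dminus; [exact e_neq0|].
  apply is_vw_derive_scal, is_vw_derive_minus, is_vw_derive_scal;
    apply is_vw_derive_csmooth; auto using csmooth_on_cpx, csmooth_on_cpy.
Qed.

End SmoothFunctions.

(** * Chain rule through u = (R, S) *)

Lemma cpx_lift (g : R -> R -> R) : cpx (lift g) = lift (px g).
Proof.
  apply functional_extensionality; intros x; apply functional_extensionality; intros y.
  unfold cpx, lift, px; simpl; rewrite Derive_const; reflexivity.
Qed.

Lemma cpy_lift (g : R -> R -> R) : cpy (lift g) = lift (py g).
Proof.
  apply functional_extensionality; intros x; apply functional_extensionality; intros y.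
  unfold cpy, lift, py; simpl; rewrite Derive_const; reflexivity.
Qed.

Lemma dplus_lift (e : C) (g : R -> R -> R) :
  dplus e (lift g) = fun x y => (/ 2 * lift (px g) x y + / 2 * / e * lift (py g) x y)%C.
Proof.
  apply functional_extensionality; intros x; apply functional_extensionality; intros y.
  unfold dplus; rewrite cpx_lift, cpy_lift; ring.
Qed.

Lemma dminus_lift (e : C) (g : R -> R -> R) :
  dminus e (lift g) = fun x y => (/ 2 * lift (px g) x y + - (/ 2 * / e) * lift (py g) x y)%C.
Proof.
  apply functional_extensionality; intros x; apply functional_extensionality; intros y.
  unfold dminus; rewrite cpx_lift, cpy_lift; ring.
Qed.

Lemma is_vw_derive_Vf (D : R -> R -> Prop) (e dlt : C) (Rf Sf : R -> R -> R) (x y : R) :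
  e <> 0%C -> smooth_on D Rf -> smooth_on D Sf -> D x y ->
  is_vw_derive e (Vf dlt Rf Sf) x y
    (dplus e (lift Rf) x y + dlt * dplus e (lift Sf) x y)%C
    (dminus e (lift Rf) x y + dlt * dminus e (lift Sf) x y)%C.
Proof.
  intros He HR HS Dxy; apply is_vw_derive_plus; [|apply is_vw_derive_scal].
  - exact (is_vw_derive_csmooth D e He (lift Rf) x y (csmooth_on_lift D Rf HR) Dxy).
  - exact (is_vw_derive_csmooth D e He (lift Sf) x y (csmooth_on_lift D Sf HS) Dxy).
Qed.

Lemma is_vw_derive_Wf (D : R -> R -> Prop) (e dlt : C) (Rf Sf : R -> R -> R) (x y : R) :
  e <> 0%C -> smooth_on D Rf -> smooth_on D Sf -> D x y ->
  is_vw_derive e (Wf dlt Rf Sf) x y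
    (dplus e (lift Rf) x y - dlt * dplus e (lift Sf) x y)%C
    (dminus e (lift Rf) x y - dlt * dminus e (lift Sf) x y)%C.
Proof.
  intros He HR HS Dxy; apply is_vw_derive_minus; [|apply is_vw_derive_scal].
  - exact (is_vw_derive_csmooth D e He (lift Rf) x y (csmooth_on_lift D Rf HR) Dxy).
  - exact (is_vw_derive_csmooth D e He (lift Sf) x y (csmooth_on_lift D Sf HS) Dxy).
Qed.

Lemma vw_jacobian (D : R -> R -> Prop) (e dlt : C) (Rf Sf : R -> R -> R) (x y : R) :
  e <> 0%C -> smooth_on D Rf -> smooth_on D Sf -> D x y ->
  (dplus e (Vf dlt Rf Sf) x y * dminus e (Wf dlt Rf Sf) x y
   - dminus e (Vf dlt Rf Sf) x y * dplus e (Wf dlt Rf Sf) x y)%C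
  = (dlt / e * RtoC (px Rf x y * py Sf x y - py Rf x y * px Sf x y))%C.
Proof.
  intros He HR HS Dxy.
  destruct (dplus_dminus_of_vw e x y He _ _ _ (is_vw_derive_Vf D e dlt Rf Sf x y He HR HS Dxy))
    as [-> ->].
  destruct (dplus_dminus_of_vw e x y He _ _ _ (is_vw_derive_Wf D e dlt Rf Sf x y He HR HS Dxy))
    as [-> ->].
  rewrite !dplus_lift, !dminus_lift; unfold lift.
  rewrite RtoC_minus, !RtoC_mult; field; exact He.
Qed.

Lemma vw_jacobian_neq0 (D : R -> R -> Prop) (e dlt : C) (Rf Sf : R -> R -> R) (x y : R) :
  e <> 0%C -> dlt <> 0%C -> smooth_on D Rf -> smooth_on D Sf -> D x y ->
  px Rf x y * py Sf x y - py Rf x y * px Sf x y <> 0 ->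
  (dplus e (Vf dlt Rf Sf) x y * dminus e (Wf dlt Rf Sf) x y
   - dminus e (Vf dlt Rf Sf) x y * dplus e (Wf dlt Rf Sf) x y)%C <> 0%C.
Proof.
  intros He Hd HR HS Dxy HJ H0; apply HJ, RtoC_inj.
  rewrite (vw_jacobian D e dlt Rf Sf x y He HR HS Dxy) in H0.
  transitivity (e / dlt * (dlt / e * RtoC (px Rf x y * py Sf x y - py Rf x y * px Sf x y)))%C;
    [field; auto | rewrite H0; ring].
Qed.

Section ChainRule.

Variables (D E : R -> R -> Prop) (e dlt : C) (Rf Sf : R -> R -> R) (x y : R).
Hypotheses (e_neq0 : e <> 0%C) (dlt_neq0 : dlt <> 0%C) (HE : open2 E)
  (HR : smooth_on D Rf) (HS : smooth_on D Sf) (Dxy : D x y) (Euxy : E (Rf x y) (Sf x y)).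

Lemma is_vw_derive_comp (G : R -> R -> R) : smooth_on E G ->
  is_vw_derive e (fun a b => lift G (Rf a b) (Sf a b)) x y
    (dplus dlt (lift G) (Rf x y) (Sf x y) * dplus e (Vf dlt Rf Sf) x y
     + dminus dlt (lift G) (Rf x y) (Sf x y) * dplus e (Wf dlt Rf Sf) x y)%C
    (dplus dlt (lift G) (Rf x y) (Sf x y) * dminus e (Vf dlt Rf Sf) x y
     + dminus dlt (lift G) (Rf x y) (Sf x y) * dminus e (Wf dlt Rf Sf) x y)%C.
Proof.
  intros HG.
  pose proof (smooth_on_differentiable E G _ _ HE HG Euxy) as dG.
  destruct (dplus_dminus_of_vw e x y e_neq0 _ _ _
    (is_vw_derive_Vf D e dlt Rf Sf x y e_neq0 HR HS Dxy)) as [-> ->].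
  destruct (dplus_dminus_of_vw e x y e_neq0 _ _ _
    (is_vw_derive_Wf D e dlt Rf Sf x y e_neq0 HR HS Dxy)) as [-> ->].
  eapply is_vw_derive_val.
  - apply is_vw_derive_of_partials; [exact e_neq0| |]; apply is_cderive_RtoC.
    + apply derivable_pt_lim_comp_2d; [exact dG | |];
        apply smooth_on_derivable_x with D; assumption.
    + apply derivable_pt_lim_comp_2d; [exact dG | |];
        apply smooth_on_derivable_y with D; assumption.
  - rewrite ?dplus_lift, ?dminus_lift; unfold lift.
    rewrite !RtoC_plus, !RtoC_mult; field; auto.
  - rewrite ?dplus_lift, ?dminus_lift; unfold lift.
    rewrite !RtoC_plus, !RtoC_mult; field; auto.
Qed.

Lemma cpx_cpy_comp (G : R -> R -> R) : smooth_on E G ->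
  cpx (fun a b => lift G (Rf a b) (Sf a b)) x y
    = RtoC (px G (Rf x y) (Sf x y) * px Rf x y + py G (Rf x y) (Sf x y) * px Sf x y) /\
  cpy (fun a b => lift G (Rf a b) (Sf a b)) x y
    = RtoC (px G (Rf x y) (Sf x y) * py Rf x y + py G (Rf x y) (Sf x y) * py Sf x y).
Proof.
  intros HG; pose proof (smooth_on_differentiable E G _ _ HE HG Euxy) as dG.
  split; apply injective_projections; unfold cpx, cpy; simpl.
  - apply Derive_of_derivable_pt_lim, derivable_pt_lim_comp_2d; [exact dG | |];
      apply smooth_on_derivable_x with D; assumption.
  - unfold px; apply Derive_const.
  - apply Derive_of_derivable_pt_lim, derivable_pt_lim_comp_2d; [exact dG | |];
      apply smooth_on_derivable_y with D; assumption.
  - unfold py; apply Derive_const.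
Qed.

Lemma is_vw_derive_comp_lincomb (H : R -> R -> C) (c1 c2 : C) (G1 G2 : R -> R -> R) :
  smooth_on E G1 -> smooth_on E G2 ->
  H = (fun r s => c1 * lift G1 r s + c2 * lift G2 r s)%C ->
  is_vw_derive e (fun a b => H (Rf a b) (Sf a b)) x y
    (dplus dlt H (Rf x y) (Sf x y) * dplus e (Vf dlt Rf Sf) x y
     + dminus dlt H (Rf x y) (Sf x y) * dplus e (Wf dlt Rf Sf) x y)%C
    (dplus dlt H (Rf x y) (Sf x y) * dminus e (Vf dlt Rf Sf) x y
     + dminus dlt H (Rf x y) (Sf x y) * dminus e (Wf dlt Rf Sf) x y)%C.
Proof.
  intros HG1 HG2 ->.
  pose proof (is_vw_derive_csmooth E dlt dlt_neq0 _ _ _ (csmooth_on_lift E G1 HG1) Euxy) as dG1.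
  pose proof (is_vw_derive_csmooth E dlt dlt_neq0 _ _ _ (csmooth_on_lift E G2 HG2) Euxy) as dG2.
  eassert (dH : is_vw_derive dlt (fun r s => c1 * lift G1 r s + c2 * lift G2 r s)%C
                  (Rf x y) (Sf x y) _ _)
    by exact (is_vw_derive_plus _ _ _ _ _ _ _ _ _
                (is_vw_derive_scal _ _ _ c1 _ _ _ dG1) (is_vw_derive_scal _ _ _ c2 _ _ _ dG2)).
  destruct (dplus_dminus_of_vw _ _ _ dlt_neq0 _ _ _ dH) as [-> ->].
  eapply is_vw_derive_val.
  - exact (is_vw_derive_plus _ _ _ _ _ _ _ _ _
             (is_vw_derive_scal _ _ _ c1 _ _ _ (is_vw_derive_comp G1 HG1))
             (is_vw_derive_scal _ _ _ c2 _ _ _ (is_vw_derive_comp G2 HG2))).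
  - ring.
  - ring.
Qed.

Lemma is_vw_derive_comp_dplus (G : R -> R -> R) : smooth_on E G ->
  let H := dplus dlt (lift G) in
  is_vw_derive e (fun a b => H (Rf a b) (Sf a b)) x y
    (dplus dlt H (Rf x y) (Sf x y) * dplus e (Vf dlt Rf Sf) x y
     + dminus dlt H (Rf x y) (Sf x y) * dplus e (Wf dlt Rf Sf) x y)%C
    (dplus dlt H (Rf x y) (Sf x y) * dminus e (Vf dlt Rf Sf) x y
     + dminus dlt H (Rf x y) (Sf x y) * dminus e (Wf dlt Rf Sf) x y)%C.
Proof.
  intros HG H; apply (is_vw_derive_comp_lincomb H (/ 2) (/ 2 * / dlt) (px G) (py G));
    [apply smooth_on_px; exact HG | apply smooth_on_py; exact HG | apply dplus_lift].
Qed.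

Lemma is_vw_derive_comp_dminus (G : R -> R -> R) : smooth_on E G ->
  let H := dminus dlt (lift G) in
  is_vw_derive e (fun a b => H (Rf a b) (Sf a b)) x y
    (dplus dlt H (Rf x y) (Sf x y) * dplus e (Vf dlt Rf Sf) x y
     + dminus dlt H (Rf x y) (Sf x y) * dplus e (Wf dlt Rf Sf) x y)%C
    (dplus dlt H (Rf x y) (Sf x y) * dminus e (Vf dlt Rf Sf) x y
     + dminus dlt H (Rf x y) (Sf x y) * dminus e (Wf dlt Rf Sf) x y)%C.
Proof.
  intros HG H; apply (is_vw_derive_comp_lincomb H (/ 2) (- (/ 2 * / dlt)) (px G) (py G));
    [apply smooth_on_px; exact HG | apply smooth_on_py; exact HG | apply dminus_lift].
Qed.

End ChainRule.

(** * Harmonic maps in specific coordinates *)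

Section HarmonicMap.

Variables (eps dlt : C) (D E : R -> R -> Prop) (F Rf Sf : R -> R -> R) (Om Th : R -> R -> C).

Hypotheses (eps_neq0 : eps <> 0%C) (dlt_neq0 : dlt <> 0%C)
  (hD : open2 D) (hE : open2 E) (hF : smooth_on E F)
  (hR : smooth_on D Rf) (hS : smooth_on D Sf) (hDE : forall x y, D x y -> E (Rf x y) (Sf x y))
  (hOm : csmooth_on D Om) (hTh : csmooth_on D Th)
  (hRx : forall x y, D x y -> RtoC (px Rf x y) =
      (2 * RtoC (exp (- F (Rf x y) (Sf x y) / 2)) * Ccosh (Om x y) * Ccosh (Th x y))%C)
  (hRy : forall x y, D x y -> RtoC (py Rf x y) =
      (2 * eps * RtoC (exp (- F (Rf x y) (Sf x y) / 2)) * Csinh (Om x y) * Csinh (Th x y))%C)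
  (hSx : forall x y, D x y -> RtoC (px Sf x y) =
      (2 / dlt * RtoC (exp (- F (Rf x y) (Sf x y) / 2)) * Ccosh (Om x y) * Csinh (Th x y))%C)
  (hSy : forall x y, D x y -> RtoC (py Sf x y) =
      (2 * eps / dlt * RtoC (exp (- F (Rf x y) (Sf x y) / 2)) * Csinh (Om x y) * Ccosh (Th x y))%C).

Local Notation V := (Vf dlt Rf Sf).
Local Notation W := (Wf dlt Rf Sf).
Local Notation halfF a b := (/ 2 * lift F (Rf a b) (Sf a b))%C.
Local Notation onuR G a b := (onu G Rf Sf a b).
Local Notation fV a b := (onuR (F_V dlt F) a b).
Local Notation fW a b := (onuR (F_W dlt F) a b).
Local Notation dFv x y := (fV x y * dplus eps V x y + fW x y * dplus eps W x y)%C.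
Local Notation dFw x y := (fV x y * dminus eps V x y + fW x y * dminus eps W x y)%C.

Lemma dVW_Cexp (a b : R) : D a b ->
  dplus eps V a b = Cexp (- halfF a b + (Om a b + Th a b)) /\
  dminus eps V a b = Cexp (- halfF a b + (Th a b - Om a b)) /\
  dplus eps W a b = Cexp (- halfF a b - (Om a b + Th a b)) /\
  dminus eps W a b = Cexp (- halfF a b + (Om a b - Th a b)).
Proof.
  intros Dab.
  destruct (dplus_dminus_of_vw eps a b eps_neq0 _ _ _
    (is_vw_derive_Vf D eps dlt Rf Sf a b eps_neq0 hR hS Dab)) as [-> ->].
  destruct (dplus_dminus_of_vw eps a b eps_neq0 _ _ _
    (is_vw_derive_Wf D eps dlt Rf Sf a b eps_neq0 hR hS Dab)) as [-> ->].
  rewrite !dplus_lift, !dminus_lift; unfold lift.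
  rewrite (hRx a b Dab), (hRy a b Dab), (hSx a b Dab), (hSy a b Dab), exp_neg_half_Cexp.
  unfold Cminus; rewrite !Cexp_add, !Cexp_opp, !Cexp_add, !Ccosh_Cexp, !Csinh_Cexp.
  pose proof (Cexp_neq0 (Om a b)); pose proof (Cexp_neq0 (Th a b)).
  pose proof (Cexp_neq0 (/ 2 * RtoC (F (Rf a b) (Sf a b)))).
  repeat split; field; auto.
Qed.

Lemma jacobian_eq (a b : R) : D a b ->
  RtoC (px Rf a b * py Sf a b - py Rf a b * px Sf a b) =
  (4 * eps / dlt * RtoC (exp (- F (Rf a b) (Sf a b) / 2)) ^ 2 * Csinh (Om a b) * Ccosh (Om a b))%C.
Proof.
  intros Dab.
  rewrite RtoC_minus, !RtoC_mult, (hRx a b Dab), (hRy a b Dab), (hSx a b Dab), (hSy a b Dab).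
  rewrite (Ccosh_Cexp (Th a b)), (Csinh_Cexp (Th a b)).
  pose proof (Cexp_neq0 (Th a b)); field; auto.
Qed.

Lemma sinh_cosh_Om_neq0 (a b : R) : nonzero_jacobian_on D Rf Sf -> D a b ->
  Csinh (Om a b) <> 0%C /\ Ccosh (Om a b) <> 0%C.
Proof.
  intros hjac Dab; split; intros H0; apply (hjac a b Dab), RtoC_inj;
    rewrite (jacobian_eq a b Dab), H0; ring.
Qed.

Lemma is_vw_derive_F (x y : R) : D x y ->
  is_vw_derive eps (fun a b => lift F (Rf a b) (Sf a b)) x y
    (dFv x y) (dFw x y).
Proof. intros Dxy; apply is_vw_derive_comp with D E; auto. Qed.

Lemma is_vw_derive_expF (x y : R) : D x y ->
  is_vw_derive eps (fun a b => RtoC (exp (F (Rf a b) (Sf a b)))) x y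
    (dFv x y * RtoC (exp (F (Rf x y) (Sf x y))))%C (dFw x y * RtoC (exp (F (Rf x y) (Sf x y))))%C.
Proof.
  intros Dxy; rewrite <- Cexp_RtoC.
  apply is_vw_derive_ext_on with D (fun a b => Cexp (lift F (Rf a b) (Sf a b))); auto.
  - intros a b _; apply Cexp_RtoC.
  - apply is_vw_derive_Cexp, is_vw_derive_F, Dxy.
Qed.

Lemma is_vw_derive_Cexp_halfF (f K : R -> R -> C) (kv kw : C) (x y : R) : D x y ->
  is_vw_derive eps K x y kv kw ->
  (forall a b, D a b -> f a b = Cexp (- halfF a b + K a b)) ->
  is_vw_derive eps f x y
    ((- (/ 2 * dFv x y) + kv) * f x y)%C ((- (/ 2 * dFw x y) + kw) * f x y)%C.
Proof.
  intros Dxy dK Hf; rewrite (Hf x y Dxy).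
  apply is_vw_derive_ext_on with D (fun a b => Cexp (- halfF a b + K a b)); auto.
  - intros a b Dab; symmetry; apply Hf, Dab.
  - apply is_vw_derive_Cexp, is_vw_derive_plus; [|exact dK].
    apply is_vw_derive_opp, is_vw_derive_scal, is_vw_derive_F, Dxy.
Qed.

Lemma is_vw_derive_dVW (x y : R) : D x y ->
  let ov := dplus eps Om x y in let ow := dminus eps Om x y in
  let tv := dplus eps Th x y in let tw := dminus eps Th x y in
  let hv := (/ 2 * dFv x y)%C in let hw := (/ 2 * dFw x y)%C in
  is_vw_derive eps (dplus eps V) x y
    ((- hv + (ov + tv)) * dplus eps V x y) ((- hw + (ow + tw)) * dplus eps V x y) /\
  is_vw_derive eps (dminus eps V) x y
    ((- hv + (tv - ov)) * dminus eps V x y) ((- hw + (tw - ow)) * dminus eps V x y) /\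
  is_vw_derive eps (dplus eps W) x y
    ((- hv - (ov + tv)) * dplus eps W x y) ((- hw - (ow + tw)) * dplus eps W x y) /\
  is_vw_derive eps (dminus eps W) x y
    ((- hv + (ov - tv)) * dminus eps W x y) ((- hw + (ow - tw)) * dminus eps W x y).
Proof.
  intros Dxy ov ow tv tw hv hw.
  pose proof (is_vw_derive_csmooth D eps eps_neq0 Om x y hOm Dxy) as dOm.
  pose proof (is_vw_derive_csmooth D eps eps_neq0 Th x y hTh Dxy) as dTh.
  split; [|split; [|split]].
  - apply (is_vw_derive_Cexp_halfF _ (fun a b => Om a b + Th a b)%C); auto.
    + apply is_vw_derive_plus; assumption.
    + intros a b Dab; exact (proj1 (dVW_Cexp a b Dab)).
  - apply (is_vw_derive_Cexp_halfF _ (fun a b => Th a b - Om a b)%C); auto.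
    + apply is_vw_derive_minus; assumption.
    + intros a b Dab; exact (proj1 (proj2 (dVW_Cexp a b Dab))).
  - apply (is_vw_derive_Cexp_halfF _ (fun a b => - (Om a b + Th a b))%C); auto.
    + apply is_vw_derive_opp, is_vw_derive_plus; assumption.
    + intros a b Dab; exact (proj1 (proj2 (proj2 (dVW_Cexp a b Dab)))).
  - apply (is_vw_derive_Cexp_halfF _ (fun a b => Om a b - Th a b)%C); auto.
    + apply is_vw_derive_minus; assumption.
    + intros a b Dab; exact (proj2 (proj2 (proj2 (dVW_Cexp a b Dab)))).
Qed.

Lemma first_order_system (x y : R) :
  harmonic_on D eps dlt F Rf Sf -> nonzero_jacobian_on D Rf Sf -> D x y ->
  (dminus eps Om x y + dminus eps Th x y
     = / 2 * (fW x y * dminus eps W x y - fV x y * dminus eps V x y))%C /\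
  (dplus eps Th x y - dplus eps Om x y
     = / 2 * (fW x y * dplus eps W x y - fV x y * dplus eps V x y))%C.
Proof.
  intros hharm hjac Dxy.
  destruct (hharm x y Dxy) as [H1 H2]; cbv beta zeta in H1, H2.
  destruct (is_vw_derive_dVW x y Dxy) as (dVv & dVw & dWv & dWw).
  pose proof (is_vw_derive_scal _ _ _ (/ 2) _ _ _ (is_vw_derive_expF x y Dxy)) as deF.
  rewrite (proj1 (dplus_dminus_of_vw _ _ _ eps_neq0 _ _ _
             (is_vw_derive_mult _ _ _ _ _ _ _ _ _ deF dWw))),
    (proj2 (dplus_dminus_of_vw _ _ _ eps_neq0 _ _ _
             (is_vw_derive_mult _ _ _ _ _ _ _ _ _ deF dWv))) in H1.
  rewrite (proj1 (dplus_dminus_of_vw _ _ _ eps_neq0 _ _ _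
             (is_vw_derive_mult _ _ _ _ _ _ _ _ _ deF dVw))),
    (proj2 (dplus_dminus_of_vw _ _ _ eps_neq0 _ _ _
             (is_vw_derive_mult _ _ _ _ _ _ _ _ _ deF dVv))) in H2.
  assert (eF_neq0 : RtoC (exp (F (Rf x y) (Sf x y))) <> 0%C).
  { rewrite <- Cexp_RtoC; apply Cexp_neq0. }
  (* Multiplied by -2 e^-F and 2 e^-F, the Euler-Lagrange equations are the rows of a
     linear system for Om_w + Th_w and Th_v - Om_v with matrix [V_v V_w; W_v W_w]. *)
  apply (linear2_unique (dplus eps V x y) (dminus eps V x y) (dplus eps W x y) (dminus eps W x y)).
  - exact (vw_jacobian_neq0 D eps dlt Rf Sf x y eps_neq0 dlt_neq0 hR hS Dxy (hjac x y Dxy)).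
  - apply (Ceq_of_sub_mul _ _ (- (2 / RtoC (exp (F (Rf x y) (Sf x y))))) _ H2);
      field; exact eF_neq0.
  - apply (Ceq_of_sub_mul _ _ (2 / RtoC (exp (F (Rf x y) (Sf x y)))) _ H1);
      field; exact eF_neq0.
Qed.

Lemma backlund_system (x y : R) :
  harmonic_on D eps dlt F Rf Sf -> nonzero_jacobian_on D Rf Sf -> D x y ->
  (cpx Om x y - / eps * cpy Th x y = / 2 * RtoC (px F (Rf x y) (Sf x y) * px Rf x y
     + py F (Rf x y) (Sf x y) * px Sf x y) * Ctanh (Om x y))%C /\
  (cpy Om x y - eps * cpx Th x y = / 2 * RtoC (px F (Rf x y) (Sf x y) * py Rf x y
     + py F (Rf x y) (Sf x y) * py Sf x y) * Ccoth (Om x y))%C.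
Proof.
  intros hharm hjac Dxy.
  destruct (first_order_system x y hharm hjac Dxy) as [A1 B1].
  destruct (cpx_cpy_comp D E Rf Sf x y hE hR hS Dxy (hDE x y Dxy) F hF) as [<- <-].
  destruct (cpx_cpy_of_vw eps x y _ _ _ (is_vw_derive_F x y Dxy)) as [-> ->].
  destruct (cpx_cpy_of_vw eps x y _ _ _ (is_vw_derive_csmooth D eps eps_neq0 Om x y hOm Dxy))
    as [-> ->].
  destruct (cpx_cpy_of_vw eps x y _ _ _ (is_vw_derive_csmooth D eps eps_neq0 Th x y hTh Dxy))
    as [-> ->].
  replace (dplus eps Om x y + dminus eps Om x y
           - / eps * (eps * (dplus eps Th x y - dminus eps Th x y)))%C
    with ((dminus eps Om x y + dminus eps Th x y) - (dplus eps Th x y - dplus eps Om x y))%C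
    by (field; exact eps_neq0).
  replace (eps * (dplus eps Om x y - dminus eps Om x y)
           - eps * (dplus eps Th x y + dminus eps Th x y))%C
    with (- eps * ((dminus eps Om x y + dminus eps Th x y)
                   + (dplus eps Th x y - dplus eps Om x y)))%C
    by ring.
  rewrite A1, B1.
  destruct (dVW_Cexp x y Dxy) as (-> & -> & -> & ->).
  destruct (sinh_cosh_Om_neq0 x y hjac Dxy) as [Hsinh Hcosh].
  unfold Ctanh, Ccoth, Cminus; rewrite Ccosh_Cexp, Csinh_Cexp.
  repeat (rewrite Cexp_add || rewrite Cexp_opp).
  apply Csinh_neq0_Cexp in Hsinh; apply Ccosh_neq0_Cexp in Hcosh.
  pose proof (Cexp_neq0 (Om x y)); pose proof (Cexp_neq0 (Th x y)).
  pose proof (Cexp_neq0 (/ 2 * RtoC (F (Rf x y) (Sf x y)))).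
  split; field; auto.
Qed.

Lemma is_vw_derive_F_V (x y : R) : D x y ->
  is_vw_derive eps (fun a b => fV a b) x y
    (onuR (F_VV dlt F) x y * dplus eps V x y + onuR (F_VW dlt F) x y * dplus eps W x y)%C
    (onuR (F_VV dlt F) x y * dminus eps V x y + onuR (F_VW dlt F) x y * dminus eps W x y)%C.
Proof.
  (* F_VW is (F_W)_V by definition; Schwarz on N identifies it with (F_V)_W. *)
  intros Dxy; unfold onu, F_VW.
  rewrite (dplus_dminus_comm E dlt dlt_neq0 (lift F) _ _ hE (csmooth_on_lift E F hF) (hDE x y Dxy)).
  exact (is_vw_derive_comp_dplus D E eps dlt Rf Sf x y eps_neq0 dlt_neq0 hE hR hS Dxy
           (hDE x y Dxy) F hF).
Qed.

Lemma is_vw_derive_F_W (x y : R) : D x y ->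
  is_vw_derive eps (fun a b => fW a b) x y
    (onuR (F_VW dlt F) x y * dplus eps V x y + onuR (F_WW dlt F) x y * dplus eps W x y)%C
    (onuR (F_VW dlt F) x y * dminus eps V x y + onuR (F_WW dlt F) x y * dminus eps W x y)%C.
Proof.
  intros Dxy;
  exact (is_vw_derive_comp_dminus D E eps dlt Rf Sf x y eps_neq0 dlt_neq0 hE hR hS Dxy
           (hDE x y Dxy) F hF).
Qed.

Lemma differentiated_first_order_system (x y : R) :
  harmonic_on D eps dlt F Rf Sf -> nonzero_jacobian_on D Rf Sf -> D x y ->
  (dplus eps (dminus eps Om) x y + dplus eps (dminus eps Th) x y
   = dplus eps (fun a b => / 2 * (fW a b * dminus eps W a b - fV a b * dminus eps V a b)) x y)%C /\
  (dplus eps (dminus eps Th) x y - dplus eps (dminus eps Om) x y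
   = dminus eps (fun a b => / 2 * (fW a b * dplus eps W a b - fV a b * dplus eps V a b)) x y)%C.
Proof.
  intros hharm hjac Dxy.
  pose proof (fun a b Dab => first_order_system a b hharm hjac Dab) as FO.
  pose proof (is_vw_derive_plus _ _ _ _ _ _ _ _ _
    (is_vw_derive_dminus_csmooth D eps eps_neq0 Om x y hOm Dxy)
    (is_vw_derive_dminus_csmooth D eps eps_neq0 Th x y hTh Dxy)) as dA.
  pose proof (is_vw_derive_minus _ _ _ _ _ _ _ _ _
    (is_vw_derive_dplus_csmooth D eps eps_neq0 Th x y hTh Dxy)
    (is_vw_derive_dplus_csmooth D eps eps_neq0 Om x y hOm Dxy)) as dB.
  apply (is_vw_derive_ext_on _ _ _ D _ _ _ _ hD (fun a b Dab => proj1 (FO a b Dab)) Dxy) in dA.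
  apply (is_vw_derive_ext_on _ _ _ D _ _ _ _ hD (fun a b Dab => proj2 (FO a b Dab)) Dxy) in dB.
  rewrite <- (dplus_dminus_comm D eps eps_neq0 _ x y hD hOm Dxy),
    <- (dplus_dminus_comm D eps eps_neq0 _ x y hD hTh Dxy) in dB.
  split; symmetry; [exact (proj1 (dplus_dminus_of_vw _ _ _ eps_neq0 _ _ _ dA))
                   | exact (proj2 (dplus_dminus_of_vw _ _ _ eps_neq0 _ _ _ dB))].
Qed.

Lemma second_order_equations (x y : R) :
  harmonic_on D eps dlt F Rf Sf -> nonzero_jacobian_on D Rf Sf -> D x y ->
  (2 * dplus eps (dminus eps Th) x y =
     RtoC (exp (- F (Rf x y) (Sf x y))) *
     ((fV x y ^ 2 - onuR (F_VV dlt F) x y) * Cexp (2 * Th x y)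
      - (fW x y ^ 2 - onuR (F_WW dlt F) x y) * Cexp (- (2 * Th x y))))%C /\
  (dplus eps (dminus eps Om) x y = - (onuR (K_N dlt F) x y / 2) * Csinh (2 * Om x y))%C.
Proof.
  intros hharm hjac Dxy.
  destruct (differentiated_first_order_system x y hharm hjac Dxy) as [EA EB].
  destruct (is_vw_derive_dVW x y Dxy) as (dVv & dVw & dWv & dWw).
  pose proof (is_vw_derive_F_V x y Dxy) as dFV; pose proof (is_vw_derive_F_W x y Dxy) as dFW.
  rewrite (proj1 (dplus_dminus_of_vw _ _ _ eps_neq0 _ _ _
    (is_vw_derive_scal _ _ _ (/ 2) _ _ _ (is_vw_derive_minus _ _ _ _ _ _ _ _ _
      (is_vw_derive_mult _ _ _ _ _ _ _ _ _ dFW dWw)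
      (is_vw_derive_mult _ _ _ _ _ _ _ _ _ dFV dVw))))) in EA.
  rewrite (proj2 (dplus_dminus_of_vw _ _ _ eps_neq0 _ _ _
    (is_vw_derive_scal _ _ _ (/ 2) _ _ _ (is_vw_derive_minus _ _ _ _ _ _ _ _ _
      (is_vw_derive_mult _ _ _ _ _ _ _ _ _ dFW dWv)
      (is_vw_derive_mult _ _ _ _ _ _ _ _ _ dFV dVv))))) in EB.
  destruct (first_order_system x y hharm hjac Dxy) as [A1 B1].
  replace (dplus eps Om x y - dplus eps Th x y)%C
    with (- (dplus eps Th x y - dplus eps Om x y))%C in EA by ring.
  rewrite B1 in EA; rewrite A1 in EB.
  destruct (dVW_Cexp x y Dxy) as (EVv & EVw & EWv & EWw).
  rewrite EVv, EVw, EWv, EWw in EA, EB.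
  pose proof (Cexp_neq0 (Om x y)); pose proof (Cexp_neq0 (Th x y)).
  pose proof (Cexp_neq0 (/ 2 * RtoC (F (Rf x y) (Sf x y)))).
  split.
  - replace (2 * dplus eps (dminus eps Th) x y)%C with
      ((dplus eps (dminus eps Om) x y + dplus eps (dminus eps Th) x y)
       + (dplus eps (dminus eps Th) x y - dplus eps (dminus eps Om) x y))%C by ring.
    rewrite EA, EB; unfold onu, K_N, lift; rewrite exp_neg_Cexp; unfold Cminus.
    repeat (rewrite Cexp_add || rewrite Cexp_opp || rewrite Cexp_double).
    field; auto.
  - replace (dplus eps (dminus eps Om) x y) with
      (/ 2 * ((dplus eps (dminus eps Om) x y + dplus eps (dminus eps Th) x y)
       - (dplus eps (dminus eps Th) x y - dplus eps (dminus eps Om) x y)))%C by field.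
    rewrite EA, EB; unfold onu, K_N, lift; rewrite exp_neg_Cexp, Csinh_Cexp; unfold Cminus.
    repeat (rewrite Cexp_add || rewrite Cexp_opp || rewrite Cexp_double).
    field; auto.
Qed.

End HarmonicMap.

Lemma one_or_i_neq0 (z : C) : z = RtoC 1 \/ z = Ci -> z <> 0%C.
Proof.
  intros [-> | ->]; [intros H; apply RtoC_inj in H; lra | exact Ci_nz].
Qed.

Theorem proposition4p1
  (eps dlt : C) (heps : eps = RtoC 1 \/ eps = Ci) (hdlt : dlt = RtoC 1 \/ dlt = Ci)
  (D : R -> R -> Prop) (hD : open2 D)
  (E : R -> R -> Prop) (hE : open2 E)
  (F : R -> R -> R) (hF : smooth_on E F)
  (Rf Sf : R -> R -> R) (hR : smooth_on D Rf) (hS : smooth_on D Sf)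
  (hDE : forall x y, D x y -> E (Rf x y) (Sf x y))
  (hharm : harmonic_on D eps dlt F Rf Sf)
  (hnontriv : nontrivial_on D eps dlt Rf Sf)
  (hjac : nonzero_jacobian_on D Rf Sf)
  (hspec : specific_coords_on D eps dlt F Rf Sf)
  (Om Th : R -> R -> C) (hOm : csmooth_on D Om) (hTh : csmooth_on D Th)
  (hRx : forall x y, D x y -> RtoC (px Rf x y) =
      (2 * RtoC (exp (- F (Rf x y) (Sf x y) / 2)) * Ccosh (Om x y) * Ccosh (Th x y))%C)
  (hRy : forall x y, D x y -> RtoC (py Rf x y) =
      (2 * eps * RtoC (exp (- F (Rf x y) (Sf x y) / 2)) * Csinh (Om x y) * Csinh (Th x y))%C)
  (hSx : forall x y, D x y -> RtoC (px Sf x y) =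
      (2 / dlt * RtoC (exp (- F (Rf x y) (Sf x y) / 2)) * Ccosh (Om x y) * Csinh (Th x y))%C)
  (hSy : forall x y, D x y -> RtoC (py Sf x y) =
      (2 * eps / dlt * RtoC (exp (- F (Rf x y) (Sf x y) / 2)) * Csinh (Om x y) * Ccosh (Th x y))%C) :
  let Fx := fun x y => px F (Rf x y) (Sf x y) * px Rf x y + py F (Rf x y) (Sf x y) * px Sf x y in
  let Fy := fun x y => px F (Rf x y) (Sf x y) * py Rf x y + py F (Rf x y) (Sf x y) * py Sf x y in
  forall x y, D x y ->
    (* Theta satisfies the first equation *)
    (2 * dplus eps (dminus eps Th) x y =
       RtoC (exp (- F (Rf x y) (Sf x y))) *
       ((onu (F_V dlt F) Rf Sf x y ^ 2 - onu (F_VV dlt F) Rf Sf x y) * Cexp (2 * Th x y)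
        - (onu (F_W dlt F) Rf Sf x y ^ 2 - onu (F_WW dlt F) Rf Sf x y) * Cexp (- (2 * Th x y))))%C /\
    (* Omega satisfies the second equation *)
    (dplus eps (dminus eps Om) x y =
       - (onu (K_N dlt F) Rf Sf x y / 2) * Csinh (2 * Om x y))%C /\
    (* the Baecklund system *)
    (cpx Om x y - / eps * cpy Th x y = / 2 * RtoC (Fx x y) * Ctanh (Om x y))%C /\
    (cpy Om x y - eps * cpx Th x y = / 2 * RtoC (Fy x y) * Ccoth (Om x y))%C.
Proof.
  intros Fx Fy x y Dxy.
  pose proof (one_or_i_neq0 eps heps) as eps_neq0.
  pose proof (one_or_i_neq0 dlt hdlt) as dlt_neq0.
  destruct (second_order_equations eps dlt D E F Rf Sf Om Th eps_neq0 dlt_neq0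
              hD hE hF hR hS hDE hOm hTh hRx hRy hSx hSy x y hharm hjac Dxy) as [HTh HOm].
  destruct (backlund_system eps dlt D E F Rf Sf Om Th eps_neq0 dlt_neq0
              hD hE hF hR hS hDE hOm hTh hRx hRy hSx hSy x y hharm hjac Dxy) as [HBx HBy].
  repeat split; assumption.
Qed.
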